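(* Let $H$ be an uncoloured graph and let $S\subseteq E(H)$. Then there exists a half-edge $2$-colouring $d$ of $H$ such that $(H,d)$ is a W-cone and every edge of $S$ is bichromatic if and only if $H$ is matching-covered and contains a universal vertex $v$ that is incident with a pair of parallel edges and with every edge of $S$.
   Context: Graphs may have parallel edges but no loops. A vertex is universal if it is adjacent to all other vertices. A half-edge $2$-colouring $d$ of $H$ assigns to each pair $(e,w)$ with $w$ an endpoint of edge $e$ a colour in $\{0,1\}$ (0 = blue, 1 = red). An edge $e=uv$ is bichromatic if $d(e,u)\neq d(e,v)$ and monochromatic otherwise; $E_b(H)$, $E_m(H)$ denote the bichromatic and monochromatic edge sets; standing convention: monochromatic edges are blue at both ends. A graph is matching-covered if every edge lies in some perfect matching. A W-cone is a half-edge $2$-coloured matching-covered graph $(H,d)$ containing a universal vertex $v$ (the apex) such that the set of edges incident with $v$ equals $E_b(H)$, $E(H-v)=E_m(H)$, and every vertex $u$ is incident with an edge $e$ with $d(e,u)=1$. *)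

(* A loopless multigraph H is given by a finite vertex type V,
   a finite edge type E and endpoint maps s t : E -> V with s e != t e. *)
From mathcomp Require Import all_boot.
Set Implicit Arguments. Unset Strict Implicit. Unset Printing Implicit Defensive.

Section Multigraph.
Variables (V E : finType) (s t : E -> V).

Definition incident (e : E) (w : V) : bool := (s e == w) || (t e == w).

Definition adjacent (u v : V) : bool :=
  [exists e : E, ((s e == u) && (t e == v)) || ((s e == v) && (t e == u))].

Definition universal (v : V) : Prop := forall u : V, u != v -> adjacent u v.

Definition parallel (e1 e2 : E) : bool :=
  (e1 != e2) &&
  (((s e1 == s e2) && (t e1 == t e2)) || ((s e1 == t e2) && (t e1 == s e2))).

Definition perfect_matching (M : {set E}) : Prop :=
  forall w : V, #|[set e in M | incident e w]| = 1.

Definition matching_covered : Prop :=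
  forall e : E, exists M : {set E}, perfect_matching M /\ e \in M.

(* Half-edge 2-colourings: d e w is the colour (false = blue, true = red) of
   the half-edge (e, w); only its values at endpoints w of e are meaningful. *)
Definition bichromatic (d : E -> V -> bool) (e : E) : bool := d e (s e) != d e (t e).
Definition monochromatic (d : E -> V -> bool) (e : E) : bool := d e (s e) == d e (t e).

(* standing convention: monochromatic edges are blue at both ends *)
Definition mono_blue (d : E -> V -> bool) : Prop :=
  forall e : E, monochromatic d e -> d e (s e) = false /\ d e (t e) = false.

Definition W_cone (d : E -> V -> bool) : Prop :=
  matching_covered /\
  exists v : V,
    universal v /\
    (forall e : E, incident e v <-> bichromatic d e) /\
    (forall e : E, ~~ incident e v <-> monochromatic d e) /\
    (forall u : V, exists e : E, incident e u /\ d e u = true).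

End Multigraph.

From mathcomp Require Import all_boot.

(* In a W-cone with apex v, a red half-edge at v lies on some edge vu that is
   blue at u; the red half-edge that u must have lies on a bichromatic edge,
   hence on a second edge vu, giving a parallel pair at v.  Conversely, given
   parallel edges e1, e2 at a universal vertex v, colour every edge at v red
   at its far end, except e1, which is red at v; all other edges are blue.
   Each u != v then gets a red half-edge from an edge uv other than e1, which
   exists because e2 is parallel to e1. *)

Set Implicit Arguments.
Unset Strict Implicit.
Unset Printing Implicit Defensive.

Section WCone.
Variables (V E : finType) (s t : E -> V).
Hypothesis noloop : forall e : E, s e != t e.

Local Notation incident := (incident s t).
Local Notation adjacent := (adjacent s t).
Local Notation parallel := (parallel s t).
Local Notation bichromatic := (bichromatic s t).
Local Notation monochromatic := (monochromatic s t).
Local Notation mono_blue := (mono_blue s t).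

Lemma monochromaticE (d : E -> V -> bool) (e : E) :
  monochromatic d e = ~~ bichromatic d e.
Proof. by rewrite negbK. Qed.

Lemma adjacent_incident (u w : V) :
  adjacent u w -> exists e : E, incident e u /\ incident e w.
Proof.
case/existsP=> e /orP[] /andP[/eqP su /eqP tw]; exists e;
  by rewrite /incident su tw !eqxx ?orbT.
Qed.

Lemma parallel_neq (e1 e2 : E) : parallel e1 e2 -> e2 != e1.
Proof. by case/andP; rewrite eq_sym. Qed.

Lemma parallel_incident (e1 e2 : E) (w : V) :
  parallel e1 e2 -> incident e1 w -> incident e2 w.
Proof.
rewrite /incident; case/andP=> _ /orP[] /andP[/eqP -> /eqP ->] //.
by rewrite orbC.
Qed.

Lemma incident_ends_parallel (e e' : E) (u w : V) :
  u != w -> e != e' ->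
  incident e u -> incident e w -> incident e' u -> incident e' w ->
  parallel e e'.
Proof.
rewrite /parallel /incident => /eqP nuw -> /=.
move: (noloop e) (noloop e') => /eqP nl /eqP nl'.
by move=> /orP[]/eqP eu /orP[]/eqP ew /orP[]/eqP e'u /orP[]/eqP e'w;
  rewrite ?eu ?ew ?e'u ?e'w ?eqxx ?orbT //; exfalso; congruence.
Qed.

Lemma incident_exclusive (e : E) (v : V) :
  incident e v -> (s e == v) != (t e == v).
Proof.
have /negbTE ne := noloop e.
by case/orP=> /eqP <-; rewrite eqxx ?ne // [t e == _]eq_sym ne.
Qed.

Lemma bichromatic_opposite (d : E -> V -> bool) (e : E) (w : V) :
  incident e w -> bichromatic d e ->
  exists u : V, [/\ u != w, incident e u & d e u = ~~ d e w].
Proof.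
rewrite /bichromatic => /orP[] /eqP <- bi.
- exists (t e); rewrite /incident eqxx orbT eq_sym noloop.
  by case: (d e _) (d e _) bi => -[].
- exists (s e); rewrite /incident eqxx noloop.
  by case: (d e _) (d e _) bi => -[].
Qed.

Lemma red_bichromatic (d : E -> V -> bool) (e : E) (w : V) :
  mono_blue d -> incident e w -> d e w -> bichromatic d e.
Proof.
move=> blue ew red; apply: contraT; rewrite -monochromaticE => mono.
have [ds dt] := blue e mono.
by case/orP: ew red => /eqP <-; rewrite ?ds ?dt.
Qed.

Lemma W_cone_apex_parallel (d : E -> V -> bool) (v : V) :
  mono_blue d ->
  (forall e : E, incident e v <-> bichromatic d e) ->
  (forall u : V, exists e : E, incident e u /\ d e u = true) ->
  exists e1 e2 : E, parallel e1 e2 /\ incident e1 v.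
Proof.
move=> blue apex red.
have [e [ev dev]] := red v.
have [u [nuv eu deu]] := bichromatic_opposite ev (proj1 (apex e) ev).
have [e' [e'u de'u]] := red u.
have e'v : incident e' v by apply/apex; exact: red_bichromatic e'u de'u.
exists e, e'; split => //.
apply: incident_ends_parallel nuv _ eu ev e'u e'v.
by apply/eqP => ee'; move: de'u; rewrite -ee' deu dev.
Qed.

Section ApexColouring.
Variables (v : V) (e1 : E).

Definition apex_colouring (e : E) (w : V) : bool :=
  incident e v && ((w == v) == (e == e1)).

Lemma apex_colouring_bichromatic (e : E) :
  bichromatic apex_colouring e = incident e v.
Proof.
rewrite /bichromatic /apex_colouring.
case ev: (incident e v) => //=.
by move: (incident_exclusive ev); case: (s e == v) (t e == v) (e == e1) => [] [] [].
Qed.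

Lemma apex_colouring_mono_blue : mono_blue apex_colouring.
Proof.
move=> e; rewrite monochromaticE apex_colouring_bichromatic.
by rewrite /apex_colouring => /negbTE ->.
Qed.

Lemma apex_colouring_red (e2 : E) :
  universal s t v -> parallel e1 e2 -> incident e1 v ->
  forall u : V, exists e : E, incident e u /\ apex_colouring e u = true.
Proof.
move=> univ par e1v u.
have [->|nuv] := eqVneq u v; first by exists e1; rewrite /apex_colouring e1v !eqxx.
have redE e : apex_colouring e u = incident e v && (e != e1).
  by rewrite /apex_colouring (negbTE nuv).
have [e [eu ev]] := adjacent_incident (univ u nuv).
have [ee1|ne] := eqVneq e e1; last by exists e; rewrite redE ev ne.
exists e2; rewrite redE (parallel_incident par e1v) (parallel_neq par).
by rewrite -ee1 in par; rewrite (parallel_incident par eu).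
Qed.

Lemma apex_colouring_W_cone (e2 : E) :
  matching_covered s t -> universal s t v ->
  parallel e1 e2 -> incident e1 v ->
  W_cone s t apex_colouring.
Proof.
move=> mc univ par e1v; split=> //; exists v; split=> //.
split; first by move=> e; rewrite apex_colouring_bichromatic.
split; first by move=> e; rewrite monochromaticE apex_colouring_bichromatic.
exact: apex_colouring_red par e1v.
Qed.

End ApexColouring.
End WCone.

Theorem mainTheorem16 (V E : finType) (s t : E -> V)
    (noloop : forall e : E, s e != t e) (S : {set E}) :
  (exists d : E -> V -> bool,
      mono_blue s t d /\ W_cone s t d /\
      (forall e : E, e \in S -> bichromatic s t d e))
  <->
  (matching_covered s t /\
   exists v : V,
     universal s t v /\
     (exists e1 e2 : E, parallel s t e1 e2 /\ incident s t e1 v) /\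
     (forall e : E, e \in S -> incident s t e v)).
Proof.
split.
- move=> [d [blue [[mc [v [univ [apex [_ red]]]]] Sbi]]].
  split=> //; exists v; split=> //; split.
    exact: (W_cone_apex_parallel noloop blue apex red).
  by move=> e /Sbi /apex.
- move=> [mc [v [univ [[e1 [e2 [par e1v]]] Sv]]]].
  exists (apex_colouring s t v e1); split; first exact: (apex_colouring_mono_blue noloop).
  split; first exact: (apex_colouring_W_cone noloop mc univ par e1v).
  by move=> e /Sv; rewrite (apex_colouring_bichromatic noloop).
Qed.
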